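(* Let $\Theta$ be a finite simple oriented graph with simple cycles $C_1,\ldots,C_k$ ($k\geq1$) that does not contain two different cycles connected by an oriented path, and let $\Theta'$ be its maximal cycle-reachable subgraph. For every vertex $x\in V(\Theta')\setminus(V(C_1)\cup\cdots\cup V(C_k))$, either all oriented paths between $x$ and any cycle lead from $x$ into cycles, or all lead from cycles into $x$. Let $k_x$ be the number of oriented paths of non-negative length in $\Theta$ ending at $x$ in the first case, and the number of oriented paths of non-negative length in $\Theta$ beginning at $x$ in the second case. Then, for any deg-lex order on the free monoid on $V(\Theta)$, in every reduced word of $\mathrm{HK}_\Theta$ the letter $x$ occurs at most $k_x$ times.
   Context: $\mathrm{HK}_\Theta$ is the Hecke--Kiselman monoid of $\Theta$: generated by the vertices $x$, with $x^2=x$; $xy=yx$ if $x,y$ are not joined by an edge; $xyx=yxy=xy$ if $x\to y$. The maximal cycle-reachable subgraph $\Theta'$ is the full subgraph of $\Theta$ on all vertices lying on a cycle together with all vertices connected to at least one cycle by an oriented path (in either direction). A path of length $0$ at $x$ counts as exactly one path starting and ending at $x$. For a word $w$ and vertex $t$: $w\nrightarrow t$ means $t$ does not occur in $w$ and no letter $x$ of $w$ has $x\to t$; $t\nrightarrow w$ means $t$ does not occur in $w$ and no letter $y$ of $w$ has $t\to y$; $t\nleftrightarrow w$ means both. Given a deg-lex order on words (induced by a total order on vertices), a word is reduced if it has no factor of the form $twt$ with $w\nrightarrow t$, no factor $twt$ with $t\nrightarrow w$, and no factor $t_1wt_2$ with $t_1>t_2$ and $t_2\nleftrightarrow t_1w$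 (here $t,t_1,t_2$ are vertices, $w$ a word). *)

From mathcomp Require Import all_boot.
Set Implicit Arguments. Unset Strict Implicit. Unset Printing Implicit Defensive.

Section HK.
Variables (V : finType) (e : rel V).

Definition simple_cycle (c : seq V) : Prop := [/\ c != [::], uniq c & cycle e c].

Definition on_cycle (x : V) : Prop := exists2 c, simple_cycle c & x \in c.

Definition no_connected_cycles : Prop :=
  forall c1 c2, simple_cycle c1 -> simple_cycle c2 ->
  forall x y, x \in c1 -> y \in c2 -> connect e x y -> exists n, c2 = rot n c1.

Definition reaches_cycle (x : V) : Prop :=
  exists c, exists y, [/\ simple_cycle c, y \in c & connect e x y].
Definition reached_from_cycle (x : V) : Prop :=
  exists c, exists y, [/\ simple_cycle c, y \in c & connect e y x].

Definition in_Theta' (x : V) : Prop :=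
  on_cycle x \/ reaches_cycle x \/ reached_from_cycle x.

Definition is_opath (s : seq V) : bool :=
  if s is y :: s' then uniq s && path e y s' else false.

Definition npaths_ending_at (x : V) : nat :=
  \sum_(n < #|V|) #|[set t : n.+1.-tuple V | is_opath t && (last x t == x)]|.
Definition npaths_starting_at (x : V) : nat :=
  \sum_(n < #|V|) #|[set t : n.+1.-tuple V | is_opath t && (head x t == x)]|.

Definition not_into (w : seq V) (t : V) : bool :=
  (t \notin w) && all (fun y => ~~ e y t) w.
Definition not_outof (t : V) (w : seq V) : bool :=
  (t \notin w) && all (fun y => ~~ e t y) w.
Definition not_adj (t : V) (w : seq V) : bool := not_into w t && not_outof t w.

(* reduced word w.r.t. the deg-lex order induced by the vertex order given by
   an injective ranking r (t1 > t2 iff r t1 > r t2) *)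
Definition reduced (r : V -> nat) (w : seq V) : Prop :=
  (~ exists a u b t, w = a ++ t :: u ++ t :: b /\ (not_into u t \/ not_outof t u)) /\
  (~ exists a u b t1 t2, w = a ++ t1 :: u ++ t2 :: b /\ r t2 < r t1 /\
        not_adj t2 (t1 :: u)).

End HK.

From mathcomp Require Import all_boot.
Set Implicit Arguments. Unset Strict Implicit. Unset Printing Implicit Defensive.

(* Suppose x reaches a cycle.  A reduced word has no factor x u x with
   u -/-> x, so between two occurrences of x there is an in-neighbour y of x,
   and the number #x of occurrences of x satisfies #x <= 1 + sum_(y -> x) #y.
   No ancestor of x lies on a cycle, so x is not on any path ending at an
   in-neighbour y; extending these paths by x gives k_x >= 1 + sum_(y -> x) k_y,
   and induction over the ancestors of x yields #x <= k_x.  A vertex reached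
   from a cycle is handled by the same argument in the reversed graph.
   Finally, if x both reached a cycle and were reached from one, the two
   cycles would coincide and x would lie on it. *)

Lemma count_mem_suffix_le_count_gaps (T : eqType) (P : pred T) x u v :
  x \notin u ->
  (forall a u' b, x :: u ++ v = a ++ x :: u' ++ x :: b -> x \notin u' -> has P u') ->
  count_mem x v <= count P (u ++ v).
Proof.
elim: v u => [//|y v IHv] u xNu.
have [-> gaps|yNx gaps] := eqVneq y x.
- have Pu : has P u := gaps [::] u v erefl xNu.
  have gaps_v : forall a u' b, x :: v = a ++ x :: u' ++ x :: b -> x \notin u' -> has P u'.
    by move=> a u' b Ev; apply: (gaps (x :: u ++ a)); rewrite /= Ev -catA.
  rewrite /= eqxx count_cat /=.
  apply: leq_add; first by rewrite -has_count.
  exact: leq_trans (IHv [::] isT gaps_v) (leq_addl _ _).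
- have xNuy : x \notin rcons u y by rewrite mem_rcons inE negb_or eq_sym yNx.
  rewrite /= (negbTE yNx) -cat_rcons.
  by apply: IHv xNuy _; rewrite cat_rcons.
Qed.

Lemma count_mem_le_count_gaps (T : eqType) (P : pred T) x w :
  (forall a u b, w = a ++ x :: u ++ x :: b -> x \notin u -> has P u) ->
  count_mem x w <= (count P w).+1.
Proof.
elim: w => [//|y w IHw] /=.
have [-> gaps|_ gaps] := eqVneq y x.
- rewrite add1n ltnS.
  exact: leq_trans (count_mem_suffix_le_count_gaps (u := [::]) isT gaps) (leq_addl _ _).
- rewrite add0n; apply: leq_trans (IHw _) _ => [a u b Ew|]; last by rewrite ltnS leq_addl.
  by apply: (gaps (y :: a)); rewrite Ew.
Qed.

Lemma count_sum_count_mem (T : finType) (P : pred T) s :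
  count P s = \sum_(y | P y) count_mem y s.
Proof.
elim: s => [|a s IHs] /=; first by rewrite big1.
rewrite IHs big_split /=; congr (_ + _).
have [Pa|NPa] := boolP (P a).
- rewrite (bigD1 a) //= eqxx big1 // => y /andP[_ yNa].
  by rewrite eq_sym (negbTE yNa).
- rewrite big1 // => y Py; case: eqP => // ay.
  by rewrite ay Py in NPa.
Qed.

Lemma sum_ord_shift (A : nat -> nat) N : A N = 0 ->
  \sum_(n < N) A n = A 0 + \sum_(n < N) A n.+1.
Proof.
move=> AN; rewrite -(big_mkord xpredT A) -(big_mkord xpredT (fun n => A n.+1)).
by rewrite -big_nat_recl // big_nat_recr //= AN addn0.
Qed.

Section Graph.
Variables (V : finType) (e : rel V).

Lemma on_cycle_edge x y : e x y -> connect e y x -> on_cycle e x.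
Proof.
move=> exy /connectP[p yp xE]; rewrite xE in exy *; move: exy.
case: (shortenP yp) => p' yp' uniq_yp' _ exy.
exists (y :: p'); last exact: mem_last.
by split=> //; rewrite /cycle /= rcons_path yp' exy.
Qed.

Lemma simple_cycle_connect c a b :
  simple_cycle e c -> a \in c -> b \in c -> connect e a b.
Proof.
case=> _ _ c_cyc ac bc; have [i p cE] := rot_to ac.
have : cycle e (a :: p) by rewrite -cE rot_cycle.
rewrite /cycle rcons_path => /andP[ap _].
by apply: (path_connect ap); rewrite -cE mem_rot.
Qed.

Lemma on_cycle_reaches_reached x : no_connected_cycles e ->
  reaches_cycle e x -> reached_from_cycle e x -> on_cycle e x.
Proof.
move=> no_conn [c1 [y1 [c1_cyc y1c1 cxy1]]] [c2 [y2 [c2_cyc y2c2 cy2x]]].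
have [n c1E] := no_conn _ _ c2_cyc c1_cyc _ _ y2c2 y1c1 (connect_trans cy2x cxy1).
have cy1x : connect e y1 x.
  apply: connect_trans (simple_cycle_connect c2_cyc _ y2c2) cy2x.
  by rewrite -(mem_rot n) -c1E.
case/connectP: cxy1 => -[/= _ y1E|z p /= /andP[exz zp] y1E].
  by exists c1; rewrite // -y1E.
apply: (on_cycle_edge exz); apply: connect_trans cy1x.
by rewrite y1E; apply: (path_connect zp); rewrite mem_last.
Qed.

Lemma on_cycle_converse z : on_cycle [rel a b | e b a] z -> on_cycle e z.
Proof.
case=> c [c_nil c_uniq c_cyc] zc; exists (rev c); last by rewrite mem_rev.
by split; rewrite ?rev_uniq ?rev_cycle // -size_eq0 size_rev size_eq0.
Qed.

Lemma is_opathE s : is_opath e s = [&& s != [::], uniq s & sorted e s].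
Proof. by case: s. Qed.

Lemma is_opath_cons x s : ~ on_cycle e x ->
  is_opath e s -> e x (head x s) -> is_opath e (x :: s).
Proof.
move=> xNcyc; case: s => [//|y s] /= /andP[uniq_ys ys] exy.
rewrite exy ys uniq_ys !andbT.
apply/negP => /(path_connect ys) cyx; exact: xNcyc (on_cycle_edge exy cyx).
Qed.

Definition opaths_from n x : {set n.+1.-tuple V} :=
  [set t : n.+1.-tuple V | is_opath e t && (head x t == x)].

Lemma card_opaths_from0_gt0 x : 0 < #|opaths_from 0 x|.
Proof. by apply/card_gt0P; exists [tuple x]; rewrite inE /= eqxx. Qed.

Lemma opaths_from_cardV x : opaths_from #|V| x = set0.
Proof.
apply/setP => t; rewrite !inE is_opathE; apply/negbTE.
apply: contraL (max_card (mem t)) => /andP[/and3P[_ /card_uniqP -> _] _].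
by rewrite size_tuple ltnn.
Qed.

Lemma sum_card_opaths_from_le_succ n x : ~ on_cycle e x ->
  \sum_(y | e x y) #|opaths_from n y| <= #|opaths_from n.+1 x|.
Proof.
move=> xNcyc.
set B := [set t : n.+1.-tuple V | is_opath e t && e x (head x t)].
have -> : \sum_(y | e x y) #|opaths_from n y| = #|B|.
  rewrite -sum1_card [RHS](partition_big (fun t : n.+1.-tuple V => head x t) (e x)); last first.
    by move=> t; rewrite inE => /andP[].
  apply: eq_bigr => y exy.
  rewrite (sum1_card [pred t | (t \in B) && (head x t == y)]).
  apply: eq_card => t; rewrite !inE.
  case: t => -[//|z s] ? /=.
  by case: eqP => [->|]; rewrite ?exy ?andbT ?andbF.
have cons_inj : injective (fun t : n.+1.-tuple V => cons_tuple x t).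
  by move=> t1 t2 /(congr1 val) /= [/val_inj].
rewrite -(card_imset _ cons_inj); apply/subset_leq_card/subsetP => _ /imsetP[t tB ->].
by move: tB; rewrite !inE /= eqxx andbT => /andP[]; apply: is_opath_cons.
Qed.

Lemma sum_npaths_starting_at_out_lt x : ~ on_cycle e x ->
  \sum_(y | e x y) npaths_starting_at e y < npaths_starting_at e x.
Proof.
move=> xNcyc; rewrite -add1n.
change (1 + \sum_(y | e x y) \sum_(n < #|V|) #|opaths_from n y|
          <= \sum_(n < #|V|) #|opaths_from n x|).
rewrite exchange_big (@sum_ord_shift (fun n => #|opaths_from n x|)) /=; last first.
  by rewrite opaths_from_cardV cards0.
apply: leq_add (card_opaths_from0_gt0 x) _.
by apply: leq_sum => n _; apply: sum_card_opaths_from_le_succ.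
Qed.

Lemma npaths_ending_at_converse x :
  npaths_ending_at e x = npaths_starting_at [rel a b | e b a] x.
Proof.
apply: eq_bigr => n _.
have revK_tuple : involutive (@rev_tuple n.+1 V) by move=> t; apply/val_inj/revK.
rewrite -(card_imset _ (inv_inj revK_tuple)) (can2_imset_pre _ revK_tuple revK_tuple).
apply: eq_card => t; rewrite !inE !is_opathE rev_uniq rev_sorted.
rewrite -size_eq0 size_rev size_eq0.
by case: t => -[//|y s] ? /=; rewrite rev_cons last_rcons.
Qed.

Lemma count_mem_le_npaths_starting_at w x :
  (forall a u b t, w = a ++ t :: u ++ t :: b -> ~~ not_outof e t u) ->
  (forall z, connect e x z -> ~ on_cycle e z) ->
  count_mem x w <= npaths_starting_at e x.
Proof.
move=> gaps; have [m] := ubnP #|[pred z | connect e x z]|.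
elim: m x => // m IHm x desc_lt desc_acyc.
have xNcyc := desc_acyc x (connect0 e x).
have out_gaps a u b : w = a ++ x :: u ++ x :: b -> x \notin u -> has (e x) u.
  by move=> /gaps; rewrite /not_outof => /[swap] ->; rewrite (all_predC (e x)) negbK.
apply: leq_trans (count_mem_le_count_gaps out_gaps) _.
rewrite count_sum_count_mem; apply: leq_trans (sum_npaths_starting_at_out_lt xNcyc).
rewrite ltnS; apply: leq_sum => y exy.
apply: IHm => [|z cyz]; last exact/desc_acyc/(connect_trans (connect1 exy)).
rewrite -ltnS; apply: leq_trans desc_lt; apply/proper_card/properP; split.
- by apply/subsetP => z; rewrite !inE; apply: connect_trans (connect1 exy).
- exists x; rewrite !inE ?connect0 //; apply/negP => /(on_cycle_edge exy).
  exact: xNcyc.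
Qed.

End Graph.

Theorem lemma3p1 (V : finType) (e : rel V)
  (e_irr : irreflexive e)
  (e_asym : forall x y, e x y -> ~~ e y x)
  (ex_cycle : exists c, simple_cycle e c)
  (no_conn : no_connected_cycles e)
  (x : V) (xT : in_Theta' e x) (xnc : ~ on_cycle e x) :
  ((reaches_cycle e x /\ ~ reached_from_cycle e x) \/
   (reached_from_cycle e x /\ ~ reaches_cycle e x)) /\
  (forall (r : V -> nat), injective r ->
   forall w : seq V, reduced e r w ->
     (reaches_cycle e x -> count_mem x w <= npaths_ending_at e x) /\
     (reached_from_cycle e x -> count_mem x w <= npaths_starting_at e x)).
Proof.
have not_both : reaches_cycle e x -> ~ reached_from_cycle e x.
  by move=> reach /(on_cycle_reaches_reached no_conn reach) /xnc.
split.
  by case: xT => [//|[reach|reached]]; [left|right]; split=> // ?; exact: not_both.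
move=> r _ w [gaps _]; split=> [reach|reached].
- rewrite npaths_ending_at_converse; apply: count_mem_le_npaths_starting_at.
    by move=> a u b t Ew; apply/negP => free; apply: gaps; exists a, u, b, t; split; [|left].
  move=> z; rewrite connect_rev /= => czx /on_cycle_converse[c c_cyc zc].
  by apply: not_both reach _; exists c, z.
- apply: count_mem_le_npaths_starting_at.
    by move=> a u b t Ew; apply/negP => free; apply: gaps; exists a, u, b, t; split; [|right].
  by move=> z cxz [c c_cyc zc]; apply: not_both _ reached; exists c, z.
Qed.
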